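(* Let $\kappa$ be a standard kernel, let $F$ be a fixed finite simple graph on vertex set $\{1,\dots,k\}$ with edge set $E(F)$, let $H$ be a fixed graph on vertex set $\{1,\dots,n\}$ ($n\ge k$, $n\ge2$) with $m$ edges, and let $x=(x_1,\dots,x_n)\in[0,1]^n$ be fixed. Define $$T_F(z_1,\dots,z_k)=\prod_{\{i,j\}\in E(F)}\kappa(z_i,z_j),\qquad \mu_F(x)=\frac1{(n)_k}\sum_{(i_1,\dots,i_k)}T_F(x_{i_1},\dots,x_{i_k}),$$ where the sum runs over all $k$-tuples of pairwise distinct indices in $\{1,\dots,n\}$. Then for every $\varepsilon>m\frac{k(k-1)}{n(n-1)}$, $$\mathbb{P}\big[|t(F,G(x,H,\kappa))-\mu_F(x)|>\varepsilon\big]\le 2\exp\left(-\frac{2\big(\varepsilon-m\frac{k(k-1)}{n(n-1)}\big)^2}{\big(\binom n2-m\big)\big(\frac{k(k-1)}{n(n-1)}\big)^2}\right).$$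
   Context: A standard kernel is a measurable symmetric function $\kappa:[0,1]^2\to[0,1]$. $(n)_k=n(n-1)\cdots(n-k+1)$. For graphs $F$ on $k$ vertices and $G$ on $n$ vertices, $t(F,G)=|\mathrm{inj}(F,G)|/(n)_k$, where $\mathrm{inj}(F,G)$ is the set of injective maps from vertices of $F$ to vertices of $G$ mapping edges to edges. The random graph $G(x,H,\kappa)$ on $\{1,\dots,n\}$: each edge $\{i,j\}$ of $H$ is present; each non-edge $\{i,j\}$ of $H$ is present independently with probability $\kappa(x_i,x_j)$. *)

From Stdlib Require Import Reals.
From mathcomp Require Import all_boot.
Set Implicit Arguments. Unset Strict Implicit. Unset Printing Implicit Defensive.

Local Open Scope R_scope.

Definition Rltb (a b : R) : bool := if Rlt_dec a b then true else false.

(* A standard kernel, as far as its values on [0,1]^2 are concerned: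
   symmetric, values in [0,1].  (Measurability is irrelevant here since
   x is fixed.) *)
Definition standard_kernel (kappa : R -> R -> R) : Prop :=
  (forall a b, 0 <= a <= 1 -> 0 <= b <= 1 -> 0 <= kappa a b <= 1) /\
  (forall a b, 0 <= a <= 1 -> 0 <= b <= 1 -> kappa a b = kappa b a).

Definition simple_graph (n : nat) (G : rel 'I_n) : Prop :=
  symmetric G /\ irreflexive G.

(* edges {i,j}, represented by the pair (i,j) with i < j *)
Definition edges (n : nat) (G : rel 'I_n) : {set 'I_n * 'I_n} :=
  [set p : 'I_n * 'I_n | (p.1 < p.2)%N && G p.1 p.2].

Definition nonedges (n : nat) (G : rel 'I_n) : {set 'I_n * 'I_n} :=
  [set p : 'I_n * 'I_n | (p.1 < p.2)%N && ~~ G p.1 p.2].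

Definition injs (k n : nat) : {set {ffun 'I_k -> 'I_n}} :=
  [set f : {ffun 'I_k -> 'I_n} | injectiveb f].

Definition inj_hom (k n : nat) (F : rel 'I_k) (G : rel 'I_n)
  : {set {ffun 'I_k -> 'I_n}} :=
  [set f in injs k n | [forall i, forall j, F i j ==> G (f i) (f j)]].

Definition tdens (k n : nat) (F : rel 'I_k) (G : rel 'I_n) : R :=
  INR #|inj_hom F G| / INR (n ^_ k)%N.

Definition Gsample (n : nat) (H : rel 'I_n) (S : {set 'I_n * 'I_n}) : rel 'I_n :=
  fun i j => [|| H i j, (i, j) \in S | (j, i) \in S].

(* probability that G(x,H,kappa) has exactly the added non-edges S
   (S a subset of the non-edges of H) *)
Definition weight (n : nat) (kappa : R -> R -> R) (x : 'I_n -> R) (H : rel 'I_n)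
  (S : {set 'I_n * 'I_n}) : R :=
  \big[Rmult/1]_(p in nonedges H)
     (if p \in S then kappa (x p.1) (x p.2) else 1 - kappa (x p.1) (x p.2)).

Definition prob_G (n : nat) (kappa : R -> R -> R) (x : 'I_n -> R) (H : rel 'I_n)
  (E : rel 'I_n -> bool) : R :=
  \big[Rplus/0]_(S in powerset (nonedges H) | E (Gsample H S)) weight kappa x H S.

Definition T_F (k : nat) (F : rel 'I_k) (kappa : R -> R -> R) (z : 'I_k -> R) : R :=
  \big[Rmult/1]_(p in edges F) kappa (z p.1) (z p.2).

Definition mu_F (k n : nat) (F : rel 'I_k) (kappa : R -> R -> R) (x : 'I_n -> R) : R :=
  / INR (n ^_ k)%N * \big[Rplus/0]_(f in injs k n) T_F F kappa (fun i => x (f i)).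

From Stdlib Require Import Reals Lra Psatz.
From mathcomp Require Import all_boot fingroup perm zify.
From HB Require Import structures.
From Coquelicot Require Import Coquelicot.
Set Warnings "-ambiguous-paths -notation-overridden -redundant-canonical-projection".
Set Implicit Arguments. Unset Strict Implicit. Unset Printing Implicit Defensive.

(* G(x,H,kappa) is H together with a random set S of non-edges of H, each
   non-edge {i,j} being present independently with probability
   kappa(x_i,x_j).  The theorem is McDiarmid's bounded-differences
   inequality for the density t(F, H + S), and the file is organised as:
   1. counting injective maps 'I_k -> 'I_n: by symmetry under
      transpositions, at most a 1/(n(n-1)) fraction of them send a given
      pair of vertices onto a given pair of distinct points (union bounds);
   2. Hoeffding's lemma for Bernoulli variables, and McDiarmid's inequality
      for a function of a random subset, by induction on the ground set;
   3. adding one non-edge changes t(F, H + S) by at most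
      c = k(k-1)/(n(n-1)), and E[t] is within m c of mu_F(x), since the
      probability that an injective g is a homomorphism equals T_F(x o g)
      unless g maps an edge of F onto an edge of H (both by step 1);
   4. hence |t - mu_F| > eps forces |t - E t| > eps - m c, an event whose
      probability McDiarmid bounds by 2 exp(-2 (eps - m c)^2/((C(n,2) - m) c^2)). *)

Local Open Scope nat_scope.

Lemma card_offdiag (N : nat) : #|[set p : 'I_N * 'I_N | p.1 != p.2]| = N * (N - 1).
Proof.
rewrite -sum1dep_card -(pair_big_dep xpredT (fun i j => i != j) (fun _ _ => 1)) /=.
rewrite (eq_bigr (fun _ => N - 1)); first by rewrite sum_nat_const card_ord.
move=> i _; rewrite sum1dep_card.
have -> : [set j : 'I_N | i != j] = [set j | j \in predC1 i].
  by apply/setP => j; rewrite !inE eq_sym.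
by rewrite cardsE cardC1 card_ord subn1.
Qed.

Lemma card_le_sum (U I : finType) (B : {set U}) (P : pred I) (C : I -> {set U}) :
  (forall u, u \in B -> exists2 i, P i & u \in C i) -> #|B| <= \sum_(i | P i) #|C i|.
Proof.
move=> cover_B; rewrite -sum1_card.
under [X in _ <= X]eq_bigr do rewrite -sum1_card.
rewrite (exchange_big_dep xpredT) //= [X in _ <= X](bigID (mem B)) /=.
apply: leq_trans (leq_addr _ _); apply: leq_sum => u uB.
have [i Pi uCi] := cover_B u uB.
by rewrite (bigD1 i) ?Pi ?uCi //= addnC leq_addl.
Qed.

Section InjectiveMaps.
Variables k n : nat.

Lemma card_injs : #|injs k n| = n ^_ k.
Proof. by rewrite /injs card_inj_ffuns !card_ord. Qed.

Definition injs_through (u v : 'I_k) (i j : 'I_n) : {set {ffun 'I_k -> 'I_n}} :=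
  [set g in injs k n | (g u == i) && (g v == j)].

(* All choices of two distinct images are equally constrained: composing with
   two transpositions of 'I_n maps the maps through (i, j) injectively to
   those through (i', j'). *)
Lemma card_injs_through_le u v i j i' j' : i != j -> i' != j' ->
  #|injs_through u v i j| <= #|injs_through u v i' j'|.
Proof.
move=> ij i'j'; set s := tperm (tperm i i' j) j'.
pose relabel (g : {ffun 'I_k -> 'I_n}) := [ffun t => s (tperm i i' (g t))].
have relabel_inj : injective relabel.
  move=> g1 g2 /ffunP E; apply/ffunP => t.
  by have := E t; rewrite !ffunE => /perm_inj/perm_inj.
rewrite -(card_imset _ relabel_inj); apply: subset_leq_card.
apply/subsetP => _ /imsetP[g + ->]; rewrite !inE => /and3P[/injectiveP g_inj /eqP gu /eqP gv].
apply/and3P; split.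
- by apply/injectiveP => t1 t2; rewrite !ffunE => /perm_inj/perm_inj/g_inj.
- rewrite ffunE gu (tpermL i i') /s tpermD //; last by rewrite eq_sym.
  by rewrite -{2}(tpermL i i') (inj_eq perm_inj) eq_sym.
- by rewrite ffunE gv /s (tpermL (tperm i i' j) j').
Qed.

Lemma card_injs_through u v i j : i != j -> #|injs_through u v i j| * (n * (n - 1)) <= n ^_ k.
Proof.
move=> ij; rewrite -card_injs -[X in _ <= X]sum1_card -card_offdiag mulnC -sum_nat_cond_const.
rewrite (partition_big (fun g : {ffun 'I_k -> 'I_n} => (g u, g v)) xpredT) //=.
rewrite [X in _ <= X](bigID (fun p : 'I_n * 'I_n => p.1 != p.2)) /=.
apply: leq_trans (leq_addr _ _); apply: leq_sum => -[i' j'] /= i'j'.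
rewrite sum1dep_card.
have -> : [set g | (g \in injs k n) && ((g u, g v) == (i', j'))] = injs_through u v i' j'.
  by apply/setP => g; rewrite !inE xpair_eqE.
exact: card_injs_through_le.
Qed.

Variable F : rel 'I_k.
Hypothesis F_irr : irreflexive F.

Lemma card_injs_hitting (P : {set 'I_n * 'I_n}) (B : {set {ffun 'I_k -> 'I_n}}) :
  (forall p, p \in P -> p.1 != p.2) ->
  (forall g, g \in B -> g \in injs k n /\ exists2 q, F q.1 q.2 & (g q.1, g q.2) \in P) ->
  #|B| * (n * (n - 1)) <= #|P| * (k * (k - 1)) * n ^_ k.
Proof.
move=> P_offdiag B_hits.
pose D := [set e : ('I_n * 'I_n) * ('I_k * 'I_k) | (e.1 \in P) && F e.2.1 e.2.2].
apply: (@leq_trans ((\sum_(e in D) #|injs_through e.2.1 e.2.2 e.1.1 e.1.2|) * (n * (n - 1)))).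
  rewrite leq_mul2r card_le_sum ?orbT // => g /B_hits[g_inj [q Fq gqP]].
  exists ((g q.1, g q.2), q); rewrite /D !inE; first exact/andP.
  by move: g_inj; rewrite inE => ->; rewrite /= !eqxx.
rewrite big_distrl /= (@leq_trans (\sum_(e in D) n ^_ k)) //.
  by apply: leq_sum => e; rewrite inE => /andP[/P_offdiag e_offdiag _]; exact: card_injs_through.
rewrite sum_nat_const leq_mul2r (_ : D = setX P [set q | F q.1 q.2]).
  rewrite cardsX leq_mul2l -card_offdiag subset_leq_card ?orbT //.
  by apply/subsetP => q; rewrite !inE; apply: contraTneq => ->; rewrite F_irr.
by apply/setP => -[p q]; rewrite !inE.
Qed.

End InjectiveMaps.

Lemma card_lt_ord (n : nat) (j : 'I_n) : #|[set i : 'I_n | i < j]| = j.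
Proof.
set widen := widen_ord (ltnW (ltn_ord j)).
have widen_inj : injective widen by move=> a b [/val_inj].
have -> : [set i : 'I_n | i < j] = widen @: [set: 'I_j].
  apply/setP => i; rewrite inE; apply/idP/imsetP => [ij | [i' _ ->]].
    by exists (Ordinal ij) => //; apply: val_inj.
  by rewrite /widen /= ltn_ord.
by rewrite (card_imset _ widen_inj) cardsT card_ord.
Qed.

Lemma card_edges_nonedges (n : nat) (H : rel 'I_n) : #|edges H| + #|nonedges H| = 'C(n, 2).
Proof.
set L := [set p : 'I_n * 'I_n | p.1 < p.2].
have -> : edges H = L :&: [set p | H p.1 p.2] by apply/setP => p; rewrite !inE.
have -> : nonedges H = L :\: [set p | H p.1 p.2] by apply/setP => p; rewrite !inE andbC.
rewrite cardsID -sum1dep_card -(pair_big_dep xpredT (fun i j : 'I_n => i < j) (fun _ _ => 1)) /=.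
rewrite (exchange_big_dep xpredT) //= (eq_bigr (fun j : 'I_n => nat_of_ord j)).
  by rewrite -(big_mkord xpredT (fun j => j)) bin2_sum.
by move=> j _; rewrite sum1dep_card card_lt_ord.
Qed.

Local Open Scope R_scope.

Lemma exp_le (x y : R) : x <= y -> exp x <= exp y.
Proof. by case=> [/exp_increasing/Rlt_le | ->] //; apply: Rle_refl. Qed.

Lemma continuity_of_derive {f : R -> R} {df t : R} : is_derive f t df -> continuity_pt f t.
Proof.
move=> /is_derive_Reals Hd; exact: (derivable_continuous_pt f t (exist _ df Hd)).
Qed.

(* A function with nonnegative second derivative whose value and slope vanish
   at 0 is nonnegative: two applications of the mean value theorem. *)
Lemma nonneg_of_second_derive {f f' f'' : R -> R} :
  (forall t, is_derive f t (f' t)) -> (forall t, is_derive f' t (f'' t)) ->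
  (forall t, 0 <= f'' t) -> f 0 = 0 -> f' 0 = 0 -> forall t, 0 <= f t.
Proof.
move=> Df Df' f''_ge0 f0 f'0.
have slope_sign u : exists d, f' u = f'' d * u.
  have [d [_ Hd]] := MVT_gen f' 0 u f'' (fun t _ => Df' t)
                       (fun t _ => continuity_of_derive (Df' t)).
  by exists d; lra.
move=> t.
have [c [Hc Hf]] := MVT_gen f 0 t f' (fun u _ => Df u)
                      (fun u _ => continuity_of_derive (Df u)).
have [d Hd] := slope_sign c.
have ct_ge0 : 0 <= c * t by move: Hc; rewrite /Rmin /Rmax; case: Rle_dec; nra.
have := f''_ge0 d; nra.
Qed.

Section HoeffdingBernoulli.
Variable p : R.
Hypothesis p01 : 0 <= p <= 1.

Let mgf t := 1 - p + p * exp t.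

Let mgf_pos t : 0 < mgf t.
Proof. rewrite /mgf; have := exp_pos t; nra. Qed.

(* the gap in the logarithmic form of the inequality, and its derivatives *)
Let gap t := t ^ 2 / 8 + p * t - ln (mgf t).
Let gap' t := t / 4 + p - p * exp t / mgf t.
Let gap'' t := 1 / 4 - p * exp t * (1 - p) / mgf t ^ 2.

Let gap_derive t : is_derive gap t (gap' t).
Proof. have := mgf_pos t; rewrite /gap /gap' /mgf => ?; auto_derive; [lra | field; lra]. Qed.

Let gap'_derive t : is_derive gap' t (gap'' t).
Proof. have := mgf_pos t; rewrite /gap' /gap'' /mgf => ?; auto_derive; [lra | field; lra]. Qed.

Let gap''_ge0 t : 0 <= gap'' t.
Proof.
have Hm := mgf_pos t.
have -> : gap'' t = (p * exp t - (1 - p)) ^ 2 / (4 * mgf t ^ 2).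
  by rewrite /gap'' /mgf in Hm *; field; lra.
apply: Rmult_le_pos; first exact: pow2_ge_0.
by apply/Rlt_le/Rinv_0_lt_compat; nra.
Qed.

Lemma hoeffding_bernoulli t :
  p * exp ((1 - p) * t) + (1 - p) * exp (- p * t) <= exp (t ^ 2 / 8).
Proof.
have gap0 : gap 0 = 0.
  by rewrite /gap /mgf exp_0 Rmult_1_r (_ : 1 - p + p = 1) ?ln_1; [lra | ring].
have gap'0 : gap' 0 = 0 by rewrite /gap' /mgf exp_0; field; lra.
have := nonneg_of_second_derive gap_derive gap'_derive gap''_ge0 gap0 gap'0 t.
have -> : p * exp ((1 - p) * t) + (1 - p) * exp (- p * t) = exp (- p * t + ln (mgf t)).
  rewrite exp_plus exp_ln // /mgf (_ : (1 - p) * t = t + - p * t); last by ring.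
  rewrite exp_plus; ring.
by rewrite /gap => ?; apply: exp_le; lra.
Qed.

End HoeffdingBernoulli.

Lemma Rplus_associative : associative Rplus. Proof. by move=> *; ring. Qed.
Lemma Rmult_associative : associative Rmult. Proof. by move=> *; ring. Qed.
HB.instance Definition _ :=
  Monoid.isComLaw.Build R 0 Rplus Rplus_associative Rplus_comm Rplus_0_l.
HB.instance Definition _ :=
  Monoid.isComLaw.Build R 1 Rmult Rmult_associative Rmult_comm Rmult_1_l.
HB.instance Definition _ := Monoid.isMulLaw.Build R 0 Rmult Rmult_0_l Rmult_0_r.
HB.instance Definition _ :=
  Monoid.isAddLaw.Build R Rmult Rplus Rmult_plus_distr_r Rmult_plus_distr_l.

Section RandomSubset.
Variable T : finType.

Lemma set_ind (P : {set T} -> Prop) :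
  P set0 -> (forall (A : {set T}) a, a \in A -> P (A :\ a) -> P A) -> forall A, P A.
Proof.
move=> P0 PD1 A; move: {2}#|A| (erefl #|A|) => n.
elim: n A => [|n IH] A cardA; first by move/eqP: cardA; rewrite cards_eq0 => /eqP ->.
have /set0Pn[a aA] : A != set0 by rewrite -card_gt0 cardA.
by apply: (PD1 _ a aA); apply: IH; move: cardA; rewrite (cardsD1 a) aA => -[].
Qed.

Lemma sum_powersetD1 (a : T) (A : {set T}) (G : {set T} -> R) : a \in A ->
  \big[Rplus/0]_(S in powerset A) G S =
  \big[Rplus/0]_(S in powerset (A :\ a)) (G S + G (a |: S)).
Proof.
move=> aA.
rewrite (bigID (fun S : {set T} => a \in S)) /= big_split /= Rplus_comm; congr (_ + _).
  by apply: eq_bigl => S; rewrite !powersetE subsetD1.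
rewrite (reindex_onto (fun S => a |: S) (fun S => S :\ a)) /=; last first.
  by move=> S /andP[_ aS]; rewrite setD1K.
apply: eq_bigl => S; rewrite !powersetE subsetD1 setU11 andbT.
have [aS|aS] := boolP (a \in S).
  by rewrite andbF; apply/negbTE/andP => -[_ /eqP E]; move: aS; rewrite -{1}E setD11.
by rewrite setU1K // eqxx andbT subUset sub1set aA andbT.
Qed.

(* The random subset of A containing each a in A independently with
   probability w a: [subset_weight A w S] is the probability of the outcome S
   and [expect A w g] the expectation of g. *)
Definition subset_weight (A : {set T}) (w : T -> R) (S : {set T}) : R :=
  \big[Rmult/1]_(a in A) (if a \in S then w a else 1 - w a).

Definition expect (A : {set T}) (w : T -> R) (g : {set T} -> R) : R :=
  \big[Rplus/0]_(S in powerset A) (subset_weight A w S * g S).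

Variables (A : {set T}) (w : T -> R).

Lemma expect_set0 (g : {set T} -> R) : expect set0 w g = g set0.
Proof. by rewrite /expect powerset0 big_set1 /subset_weight big_set0 Rmult_1_l. Qed.

Lemma expect_D1 (a : T) (g : {set T} -> R) : a \in A ->
  expect A w g =
  w a * expect (A :\ a) w (fun S => g (a |: S)) + (1 - w a) * expect (A :\ a) w g.
Proof.
move=> aA; rewrite /expect (sum_powersetD1 _ aA) big_split /= !big_distrr /=.
rewrite Rplus_comm; congr (_ + _); apply: eq_bigr => S.
all: rewrite powersetE subsetD1 => /andP[_ aS]; rewrite /subset_weight (big_setD1 _ aA) /=.
  rewrite setU11 (eq_bigr (fun b => if b \in S then w b else 1 - w b)); first by ring.
  by move=> b; rewrite in_setD1 in_setU1 => /andP[/negbTE -> _].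
by rewrite (negbTE aS); ring.
Qed.

Lemma expect_ext (g1 g2 : {set T} -> R) :
  (forall S : {set T}, S \subset A -> g1 S = g2 S) -> expect A w g1 = expect A w g2.
Proof. by move=> E; apply: eq_bigr => S; rewrite powersetE => /E ->. Qed.

Lemma expect_scale (r : R) (g : {set T} -> R) :
  expect A w (fun S => r * g S) = r * expect A w g.
Proof. by rewrite /expect big_distrr; apply: eq_bigr => S _ /=; ring. Qed.

Lemma expect_add (g1 g2 : {set T} -> R) :
  expect A w (fun S => g1 S + g2 S) = expect A w g1 + expect A w g2.
Proof. by rewrite /expect -big_split; apply: eq_bigr => S _ /=; ring. Qed.

Lemma expect_sum (I : finType) (P : pred I) (G : I -> {set T} -> R) :
  expect A w (fun S => \big[Rplus/0]_(i | P i) G i S) =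
  \big[Rplus/0]_(i | P i) expect A w (G i).
Proof. rewrite /expect; under eq_bigr do rewrite big_distrr; exact: exchange_big. Qed.

Hypothesis w01 : forall a, a \in A -> 0 <= w a <= 1.

Lemma expect_le (g1 g2 : {set T} -> R) :
  (forall S : {set T}, S \subset A -> g1 S <= g2 S) -> expect A w g1 <= expect A w g2.
Proof.
move=> le_g; apply: big_ind2 => [|*|S]; [lra | lra |].
rewrite powersetE => /le_g le_gS; apply: Rmult_le_compat_l => //.
apply: big_ind => [|*|a /w01]; [lra | nra | by case: (a \in S); lra].
Qed.

End RandomSubset.

Section RandomSubsetInduction.
Variables (T : finType) (w : T -> R).

Lemma expect_const (A : {set T}) (r : R) : expect A w (fun _ => r) = r.
Proof.
elim/set_ind: A => [|A a aA IH]; first by rewrite expect_set0.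
by rewrite (expect_D1 _ _ aA) IH; ring.
Qed.

Lemma expect_indicator_le1 (A : {set T}) (E : {set T} -> bool) :
  (forall a, a \in A -> 0 <= w a <= 1) -> expect A w (fun S => if E S then 1 else 0) <= 1.
Proof.
move=> w01; rewrite -[X in _ <= X](expect_const A 1).
by apply: expect_le => // S _; case: (E S); lra.
Qed.

Lemma expect_contains (A B : {set T}) : B \subset A ->
  expect A w (fun S => if B \subset S then 1 else 0) = \big[Rmult/1]_(b in B) w b.
Proof.
elim/set_ind: A B => [|A a aA IH] B BA.
  by move: BA; rewrite subset0 => /eqP ->; rewrite expect_set0 sub0set big_set0.
rewrite (expect_D1 _ _ aA); have [aB|aB] := boolP (a \in B).
- have BaA : B :\ a \subset A :\ a by apply: setSD.
  rewrite (expect_ext w (g2 := fun S => if B :\ a \subset S then 1 else 0)); last first.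
    by move=> S _; rewrite subDset setUC.
  rewrite (expect_ext w (g1 := fun S => if B \subset S then 1 else 0) (g2 := fun _ => 0));
    last first.
    move=> S SAa; case: ifP => // /subsetP/(_ a aB) aS.
    by move: (subsetP SAa a aS); rewrite setD11.
  by rewrite IH // expect_const (big_setD1 a aB) /=; ring.
- have BAa : B \subset A :\ a by rewrite subsetD1 BA aB.
  rewrite (expect_ext w (g2 := fun S => if B \subset S then 1 else 0)); last first.
    move=> S _; congr (if _ then _ else _); apply/idP/idP => [BaS|/subset_trans->//].
      apply/subsetP => b bB; move: (subsetP BaS b bB); rewrite in_setU1.
      by case/orP=> // /eqP ba; move: aB; rewrite -ba bB.
    exact: subsetUr.
  by rewrite IH //; ring.
Qed.

End RandomSubsetInduction.

(* One step of the Hoeffding-Azuma martingale argument: averaging two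
   exponential moments that are each at most B, with weights p and 1 - p and
   centred at the p-average of two values at distance at most c. *)
Lemma hoeffding_step (p s D c B X1 X0 : R) :
  0 <= p <= 1 -> Rabs D <= c -> 0 <= B -> X1 <= B -> X0 <= B ->
  p * (exp ((1 - p) * (s * D)) * X1) + (1 - p) * (exp (- p * (s * D)) * X0)
  <= B * exp (s ^ 2 * c ^ 2 / 8).
Proof.
move=> p01 Dc B0 X1B X0B.
set e1 := exp ((1 - p) * (s * D)); set e0 := exp (- p * (s * D)).
have pe1 : 0 <= p * e1 by apply: Rmult_le_pos; [lra | exact/Rlt_le/exp_pos].
have pe0 : 0 <= (1 - p) * e0 by apply: Rmult_le_pos; [lra | exact/Rlt_le/exp_pos].
apply: (Rle_trans _ (B * (p * e1 + (1 - p) * e0))); first nra.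
apply: (Rle_trans _ (B * exp ((s * D) ^ 2 / 8))).
  exact/Rmult_le_compat_l/hoeffding_bernoulli.
apply/Rmult_le_compat_l/exp_le => //.
have : D ^ 2 <= c ^ 2 by move: Dc; split_Rabs; nra.
have := pow2_ge_0 s; nra.
Qed.

Section McDiarmid.
Variables (T : finType) (w : T -> R).

Definition bounded_differences (A : {set T}) (g : {set T} -> R) (c : R) : Prop :=
  forall (S : {set T}) a, a \in A -> S \subset A :\ a -> Rabs (g (a |: S) - g S) <= c.

Lemma bounded_differencesD1 (A : {set T}) (g : {set T} -> R) (c : R) (a : T) : a \in A ->
  bounded_differences A g c -> bounded_differences (A :\ a) g c.
Proof.
move=> aA gc S b; rewrite in_setD1 => /andP[ba bA] SAab; apply: gc => //.
by apply: subset_trans SAab _; rewrite setDDl setUC -setDDl subsetDl.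
Qed.

Lemma bounded_differencesU1 (A : {set T}) (g : {set T} -> R) (c : R) (a : T) : a \in A ->
  bounded_differences A g c -> bounded_differences (A :\ a) (fun S => g (a |: S)) c.
Proof.
move=> aA gc S b; rewrite in_setD1 => /andP[ba bA] /subsetD1P[/subsetD1P[SA aS] bS].
rewrite setUCA; apply: gc => //; apply/subsetD1P; split.
  by rewrite subUset sub1set aA.
by rewrite in_setU1 negb_or ba.
Qed.

Lemma bounded_differencesN (A : {set T}) (g : {set T} -> R) (c : R) :
  bounded_differences A g c -> bounded_differences A (fun S => - g S) c.
Proof.
move=> gc S a aA SA; rewrite (_ : - g (a |: S) - - g S = - (g (a |: S) - g S)); last by ring.
by rewrite Rabs_Ropp; apply: gc.
Qed.

Lemma expect_recentre (B : {set T}) (h : {set T} -> R) (s M : R) :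
  expect B w (fun S => exp (s * (h S - M))) =
  exp (s * (expect B w h - M)) * expect B w (fun S => exp (s * (h S - expect B w h))).
Proof.
rewrite -expect_scale; apply: expect_ext => S _; rewrite -exp_plus; congr exp; ring.
Qed.

Hypothesis w01 : forall a, 0 <= w a <= 1.

Lemma expect_abs_le (A : {set T}) (g : {set T} -> R) (c : R) :
  (forall S : {set T}, S \subset A -> Rabs (g S) <= c) -> Rabs (expect A w g) <= c.
Proof.
move=> gc; apply: Rabs_le; split.
  rewrite -(expect_const w A (- c)); apply: expect_le => // S /gc; split_Rabs; lra.
rewrite -(expect_const w A c); apply: expect_le => // S /gc; split_Rabs; lra.
Qed.

Lemma conditional_mean_gap (A : {set T}) (g : {set T} -> R) (c : R) (a : T) :
  a \in A -> bounded_differences A g c ->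
  Rabs (expect (A :\ a) w (fun S => g (a |: S)) - expect (A :\ a) w g) <= c.
Proof.
move=> aA gc.
rewrite (_ : _ - _ = expect (A :\ a) w (fun S => g (a |: S) + -1 * g S)); last first.
  by rewrite expect_add expect_scale; ring.
by apply: expect_abs_le => S SAa; rewrite (_ : _ + _ = g (a |: S) - g S); [exact: gc | ring].
Qed.

Lemma mcdiarmid_mgf (A : {set T}) (g : {set T} -> R) (c s : R) :
  0 <= c -> bounded_differences A g c ->
  expect A w (fun S => exp (s * (g S - expect A w g))) <= exp (s ^ 2 * INR #|A| * c ^ 2 / 8).
Proof.
move=> c0; elim/set_ind: A g => [|A a aA IH] g gc.
  by rewrite !expect_set0 cards0 Rminus_diag Rmult_0_r; apply: exp_le; simpl; lra.
set E1 := expect (A :\ a) w (fun S => g (a |: S)); set E0 := expect (A :\ a) w g.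
set B := exp (s ^ 2 * INR #|A :\ a| * c ^ 2 / 8).
have mean : expect A w g = w a * E1 + (1 - w a) * E0 by rewrite (expect_D1 _ _ aA).
rewrite (expect_D1 _ _ aA) mean (expect_recentre (A :\ a) (fun S => g (a |: S))).
rewrite (expect_recentre (A :\ a) g) -/E1 -/E0.
rewrite (_ : s * (E1 - _) = (1 - w a) * (s * (E1 - E0))); last by ring.
rewrite (_ : s * (E0 - _) = - w a * (s * (E1 - E0))); last by ring.
apply: (Rle_trans _ (B * exp (s ^ 2 * c ^ 2 / 8))).
  apply: hoeffding_step => //; first exact: conditional_mean_gap.
  - exact/Rlt_le/exp_pos.
  - exact/IH/bounded_differencesU1.
  - exact/IH/bounded_differencesD1.
have -> : INR #|A| = INR #|A :\ a| + 1 by rewrite (cardsD1 a A) aA add1n S_INR.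
by rewrite /B -exp_plus; apply: exp_le; lra.
Qed.

(* One-sided McDiarmid inequality, by the exponential Markov (Chernoff) bound
   with the optimal parameter s = 4 d / (|A| c^2). *)
Lemma mcdiarmid_upper (A : {set T}) (g : {set T} -> R) (c d : R) :
  0 <= c -> bounded_differences A g c -> 0 < d -> 0 < INR #|A| * c ^ 2 ->
  expect A w (fun S => if Rltb d (g S - expect A w g) then 1 else 0)
  <= exp (- (2 * d ^ 2) / (INR #|A| * c ^ 2)).
Proof.
move=> c0 gc d0 Nc0; set E := expect A w g.
have [c_neq0 N_neq0] : c <> 0 /\ INR #|A| <> 0 by split=> h; rewrite h in Nc0; nra.
set s := 4 * d / (INR #|A| * c ^ 2).
have s0 : 0 < s by rewrite /s /Rdiv; apply: Rmult_lt_0_compat; [lra | exact: Rinv_0_lt_compat].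
apply: (Rle_trans _ (expect A w (fun S => exp (- (s * d)) * exp (s * (g S - E))))).
  apply: expect_le => [a _ | S _]; first exact: w01.
  rewrite -exp_plus /Rltb; case: Rlt_dec => [dgS|ndgS]; last exact/Rlt_le/exp_pos.
  by rewrite -exp_0; apply: exp_le; nra.
rewrite expect_scale.
apply: (Rle_trans _ (exp (- (s * d)) * exp (s ^ 2 * INR #|A| * c ^ 2 / 8))).
  exact/Rmult_le_compat_l/mcdiarmid_mgf/gc/c0/Rlt_le/exp_pos.
by rewrite -exp_plus; apply: exp_le; right; rewrite /s; field.
Qed.

Lemma mcdiarmid (A : {set T}) (g : {set T} -> R) (c d : R) :
  0 <= c -> bounded_differences A g c -> 0 < d -> 0 < INR #|A| * c ^ 2 ->
  expect A w (fun S => if Rltb d (Rabs (g S - expect A w g)) then 1 else 0)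
  <= 2 * exp (- (2 * d ^ 2) / (INR #|A| * c ^ 2)).
Proof.
move=> c0 gc d0 Nc0.
have mean_opp : expect A w (fun S => - g S) = - expect A w g.
  rewrite (_ : - expect A w g = -1 * expect A w g); last by ring.
  by rewrite -expect_scale; apply: expect_ext => S _; ring.
have upper := mcdiarmid_upper c0 gc d0 Nc0.
have lower := mcdiarmid_upper c0 (bounded_differencesN gc) d0 Nc0.
rewrite mean_opp in lower.
set bound := exp _ in upper lower *.
rewrite (_ : 2 * bound = bound + bound); last by ring.
apply: (Rle_trans _ _ _ _ (Rplus_le_compat _ _ _ _ upper lower)); rewrite -expect_add.
apply: expect_le => [a _ | S _]; first exact: w01.
by rewrite /Rltb; do 3 case: Rlt_dec => /=; split_Rabs; lra.
Qed.

End McDiarmid.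

Lemma INR_sum (I : finType) (P : pred I) (G : I -> nat) :
  INR (\sum_(i | P i) G i) = \big[Rplus/0]_(i | P i) INR (G i).
Proof. exact: (big_morph INR plus_INR). Qed.

Lemma Rabs_sum_le (I : finType) (P : pred I) (G : I -> R) :
  Rabs (\big[Rplus/0]_(i | P i) G i) <= \big[Rplus/0]_(i | P i) Rabs (G i).
Proof.
apply: (big_ind2 (fun a b => Rabs a <= b)) => [|a b c d ab cd|i _]; last lra.
  by rewrite Rabs_R0; lra.
by apply: (Rle_trans _ _ _ (Rabs_triang _ _)); lra.
Qed.

Lemma sum_le (I : finType) (P : pred I) (G1 G2 : I -> R) :
  (forall i, P i -> G1 i <= G2 i) ->
  \big[Rplus/0]_(i | P i) G1 i <= \big[Rplus/0]_(i | P i) G2 i.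
Proof. by move=> le12; apply: (big_ind2 Rle) => // [|*]; lra. Qed.

Lemma sum_minus (I : finType) (P : pred I) (G1 G2 : I -> R) :
  \big[Rplus/0]_(i | P i) G1 i - \big[Rplus/0]_(i | P i) G2 i =
  \big[Rplus/0]_(i | P i) (G1 i - G2 i).
Proof.
rewrite /Rminus big_split /=; congr (_ + _).
exact: (big_morph Ropp Ropp_plus_distr Ropp_0).
Qed.

Lemma Rdiv_nonneg (a b : R) : 0 <= a -> 0 < b -> 0 <= a / b.
Proof. by move=> a0 b0; apply: Rmult_le_pos => //; exact/Rlt_le/Rinv_0_lt_compat. Qed.

Lemma prod01 (I : finType) (P : pred I) (G : I -> R) :
  (forall i, P i -> 0 <= G i <= 1) -> 0 <= \big[Rmult/1]_(i | P i) G i <= 1.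
Proof. by move=> G01; apply: (big_ind (fun a => 0 <= a <= 1)) => // [|a b]; nra. Qed.

Lemma INR_ratio_le (a b c d : nat) : (0 < b)%N -> (0 < d)%N -> (a * d <= c * b)%N ->
  INR a / INR b <= INR c / INR d.
Proof.
move=> /ltP/lt_0_INR b0 /ltP/lt_0_INR d0 /leP/le_INR; rewrite !mult_INR => le_ad_cb.
apply: (Rmult_le_reg_r (INR b * INR d)); first exact: Rmult_lt_0_compat.
have -> : INR a / INR b * (INR b * INR d) = INR a * INR d by field; lra.
have -> : INR c / INR d * (INR b * INR d) = INR c * INR b by field; lra.
exact: le_ad_cb.
Qed.

Section GraphSampling.
Variables (kappa : R -> R -> R) (k n : nat) (F : rel 'I_k) (H : rel 'I_n) (x : 'I_n -> R).
Hypothesis kappa_std : standard_kernel kappa.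
Hypothesis F_simple : simple_graph F.
Hypothesis H_simple : simple_graph H.
Hypothesis x01 : forall i, 0 <= x i <= 1.
Hypothesis n_ge2 : (2 <= n)%N.
Hypothesis k_le_n : (k <= n)%N.

Definition edge_prob (p : 'I_n * 'I_n) : R := kappa (x p.1) (x p.2).

Definition density_step : R := INR (k * (k - 1)) / INR (n * (n - 1)).

Lemma edge_prob01 p : 0 <= edge_prob p <= 1.
Proof. by case: kappa_std => kappa01 _; apply: kappa01. Qed.

Lemma prob_G_expect (E : rel 'I_n -> bool) :
  prob_G kappa x H E = expect (nonedges H) edge_prob (fun S => if E (Gsample H S) then 1 else 0).
Proof.
rewrite /prob_G /expect big_mkcondr; apply: eq_bigr => S _.
by case: ifP => _; rewrite ?Rmult_1_r ?Rmult_0_r.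
Qed.

Lemma F_sym : symmetric F. Proof. by case: F_simple. Qed.
Lemma F_irr : irreflexive F. Proof. by case: F_simple. Qed.
Lemma H_sym : symmetric H. Proof. by case: H_simple. Qed.

Lemma inj_homP (G : rel 'I_n) (g : {ffun 'I_k -> 'I_n}) :
  reflect (g \in injs k n /\ forall u v, F u v -> G (g u) (g v)) (g \in inj_hom F G).
Proof.
apply: (iffP setIdP) => [[g_inj /forallP homg]|[g_inj homg]]; split => //.
  by move=> u v Fuv; move/forallP/(_ v)/implyP: (homg u); apply.
by apply/forallP => u; apply/forallP => v; apply/implyP; exact: homg.
Qed.

Lemma injsP (g : {ffun 'I_k -> 'I_n}) : g \in injs k n -> injective g.
Proof. by rewrite inE => /injectiveP. Qed.

Lemma inj_hom_add_edge (S : {set 'I_n * 'I_n}) a :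
  inj_hom F (Gsample H S) \subset inj_hom F (Gsample H (a |: S)).
Proof.
apply/subsetP => g /inj_homP[g_inj homg]; apply/inj_homP; split => // u v /homg.
by rewrite /Gsample !in_setU1 => /or3P[->|->|->]; rewrite ?orbT.
Qed.

(* Adding the edge a creates only the homomorphisms that map an edge of F
   onto a; by the union bound there are at most k(k-1)(n)_k/(n(n-1)). *)
Lemma card_new_homs (S : {set 'I_n * 'I_n}) (a : 'I_n * 'I_n) : a.1 != a.2 ->
  (#|inj_hom F (Gsample H (a |: S)) :\: inj_hom F (Gsample H S)| * (n * (n - 1))
   <= k * (k - 1) * n ^_ k)%N.
Proof.
move=> a_offdiag; have := card_injs_hitting F_irr (P := [set a]).
rewrite cards1 mul1n; apply=> [p|g]; first by rewrite inE => /eqP ->.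
rewrite inE => /andP[gS /inj_homP[g_inj homg]]; split => //.
move: gS; rewrite inE g_inj /= negb_forall => /existsP[u]; rewrite negb_forall.
move=> /existsP[v]; rewrite negb_imply => /andP[Fuv not_homS].
move: (homg u v Fuv) not_homS; rewrite /Gsample !in_setU1.
case: (eqVneq (g u, g v) a) => [uva|_]; first by exists (u, v); rewrite // -uva inE.
case: (eqVneq (g v, g u) a) => [vua|_]; first by exists (v, u); rewrite /= 1?F_sym // -vua inE.
by move=> /= ->.
Qed.

Lemma nn_pos : 0 < INR (n * (n - 1)).
Proof. by apply/lt_0_INR/ltP; rewrite muln_gt0 subn_gt0 (ltnW n_ge2) n_ge2. Qed.

Lemma ffact_pos : (0 < n ^_ k)%N.
Proof. by rewrite ffact_gt0. Qed.

Lemma density_step_ge0 : 0 <= density_step.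
Proof. by apply: Rdiv_nonneg; [exact: pos_INR | exact: nn_pos]. Qed.

Lemma tdens_bounded_differences :
  bounded_differences (nonedges H) (fun S => tdens F (Gsample H S)) density_step.
Proof.
move=> S a; rewrite inE => /andP[a12 _] _.
have a_offdiag : a.1 != a.2 by apply: contraTneq a12 => ->; rewrite ltnn.
rewrite /tdens; set hom1 := inj_hom F _; set hom0 := inj_hom F _.
have -> : #|hom1| = (#|hom0| + #|hom1 :\: hom0|)%N.
  by rewrite -(cardsID hom0 hom1) (setIidPr (inj_hom_add_edge S a)).
have N0 : 0 < INR (n ^_ k) by apply/lt_0_INR/ltP/ffact_pos.
rewrite plus_INR.
rewrite (_ : _ - _ = INR #|hom1 :\: hom0| / INR (n ^_ k)); last by field; lra.
rewrite Rabs_pos_eq; last by apply: Rdiv_nonneg; [exact: pos_INR | lra].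
by apply: INR_ratio_le; [exact: ffact_pos | nia | exact: card_new_homs].
Qed.

Definition upair (i j : 'I_n) : 'I_n * 'I_n := if (i < j)%N then (i, j) else (j, i).

Lemma upair_sym i j : upair i j = upair j i.
Proof. by rewrite /upair; case: (ltngtP i j) => // /val_inj ->. Qed.

Lemma edge_prob_upair i j : edge_prob (upair i j) = kappa (x i) (x j).
Proof. by rewrite /edge_prob /upair; case: ifP => _ //=; case: kappa_std => _; apply. Qed.

Lemma mem_upair (S : {set 'I_n * 'I_n}) i j : S \subset nonedges H ->
  ((i, j) \in S) || ((j, i) \in S) = (upair i j \in S).
Proof.
move=> SA; have ordered (a b : 'I_n) : (b < a)%N -> (a, b) \notin S.
  by move=> ba; apply: contraTN ba => /(subsetP SA); rewrite inE /= => /andP[/ltnW/leq_gtF ->].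
rewrite /upair; case: (ltngtP i j) => [ij|ji|/val_inj ->]; last by rewrite orbb.
  by rewrite (negbTE (ordered _ _ ij)) orbF.
by rewrite (negbTE (ordered _ _ ji)).
Qed.

Definition missing_edges (g : {ffun 'I_k -> 'I_n}) : {set 'I_k * 'I_k} :=
  [set q in edges F | ~~ H (g q.1) (g q.2)].

Definition required_pairs (g : {ffun 'I_k -> 'I_n}) : {set 'I_n * 'I_n} :=
  [set upair (g q.1) (g q.2) | q in missing_edges g].

Lemma inj_hom_required g (S : {set 'I_n * 'I_n}) : g \in injs k n -> S \subset nonedges H ->
  (g \in inj_hom F (Gsample H S)) = (required_pairs g \subset S).
Proof.
move=> g_inj SA; apply/inj_homP/subsetP => [[_ homg] _ /imsetP[q + ->]|req_S].
  rewrite !inE => /andP[/andP[_ Fq] notH].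
  by move: (homg _ _ Fq); rewrite /Gsample (negbTE notH) /= mem_upair.
split=> // u v Fuv; rewrite /Gsample; case Huv: (H (g u) (g v)) => //=.
rewrite mem_upair //; case: (ltngtP u v) => [uv|vu|/val_inj uv]; last by rewrite uv F_irr in Fuv.
  by apply: req_S; apply/imsetP; exists (u, v); rewrite // !inE /= uv Fuv Huv.
rewrite upair_sym; apply: req_S; apply/imsetP; exists (v, u) => //.
by rewrite !inE /= vu F_sym Fuv H_sym Huv.
Qed.

Lemma required_nonedges g : g \in injs k n -> required_pairs g \subset nonedges H.
Proof.
move/injsP => g_inj; apply/subsetP => _ /imsetP[q + ->].
rewrite !inE => /andP[/andP[q12 _] notH].
have gq : g q.1 != g q.2 by apply: contraTneq q12 => /g_inj ->; rewrite ltnn.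
rewrite /upair; case: (ltngtP (g q.1) (g q.2)) => [lt|gt|/val_inj eq] /=.
- by rewrite lt notH.
- by rewrite gt H_sym notH.
- by rewrite eq eqxx in gq.
Qed.

Lemma upair_injective g : g \in injs k n ->
  {in missing_edges g &, injective (fun q => upair (g q.1) (g q.2))}.
Proof.
move/injsP => g_inj [q1 q2] [r1 r2]; rewrite !inE /= => /andP[/andP[q12 _] _] /andP[/andP[r12 _] _].
rewrite /upair; case: ifP => _; case: ifP => _ [/g_inj e1 /g_inj e2]; subst => //.
all: by move: (ltn_trans q12 r12); rewrite ltnn.
Qed.

Lemma prob_inj_hom g : g \in injs k n ->
  expect (nonedges H) edge_prob (fun S => if g \in inj_hom F (Gsample H S) then 1 else 0) =
  \big[Rmult/1]_(q in missing_edges g) kappa (x (g q.1)) (x (g q.2)).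
Proof.
move=> g_inj; rewrite (expect_ext _ (g2 := fun S => if required_pairs g \subset S then 1 else 0)).
  rewrite expect_contains ?required_nonedges // big_imset /=; last exact: upair_injective.
  by apply: eq_bigr => q _; rewrite edge_prob_upair.
by move=> S SA; rewrite inj_hom_required.
Qed.

Definition hits_H (g : {ffun 'I_k -> 'I_n}) : bool :=
  [exists q, (q \in edges F) && H (g q.1) (g q.2)].

Lemma prob_inj_hom_T_F g : g \in injs k n ->
  Rabs (expect (nonedges H) edge_prob (fun S => if g \in inj_hom F (Gsample H S) then 1 else 0)
        - T_F F kappa (fun i => x (g i))) <= (if hits_H g then 1 else 0).
Proof.
move=> g_inj; rewrite prob_inj_hom // /T_F [X in _ - X](bigID (fun q => ~~ H (g q.1) (g q.2))) /=.
have -> : \big[Rmult/1]_(q in edges F | ~~ H (g q.1) (g q.2)) kappa (x (g q.1)) (x (g q.2)) =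
          \big[Rmult/1]_(q in missing_edges g) kappa (x (g q.1)) (x (g q.2)).
  by apply: eq_bigl => q; rewrite /missing_edges in_set.
set P := \big[Rmult/1]_(q in missing_edges g) kappa (x (g q.1)) (x (g q.2)).
set Q := \big[Rmult/1]_(q in edges F | ~~ ~~ H (g q.1) (g q.2)) kappa (x (g q.1)) (x (g q.2)).
have kappa01 i j : 0 <= kappa (x i) (x j) <= 1 by case: kappa_std => h _; apply: h.
have P01 : 0 <= P <= 1 by apply: prod01.
have Q01 : 0 <= Q <= 1 by apply: prod01.
case: ifPn => [_|/existsPn no_hit]; first by apply: Rabs_le; nra.
rewrite (_ : Q = 1) ?Rmult_1_r ?Rminus_diag ?Rabs_R0; first lra.
by apply: big_pred0 => q; rewrite negbK; exact/negbTE/no_hit.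
Qed.

Lemma card_hits_H :
  (#|[set g in injs k n | hits_H g]| * (n * (n - 1)) <= #|edges H| * (k * (k - 1)) * n ^_ k)%N.
Proof.
apply: (card_injs_hitting F_irr) => [p|g]; first by rewrite inE => /andP[/ltn_eqF/negbT].
move=> /setIdP[g_inj /existsP[q /andP[qF Hq]]]; split=> //.
move: qF; rewrite inE => /andP[q12 Fq]; have /injsP g_injective := g_inj.
case: (ltngtP (g q.1) (g q.2)) => [lt|gt|/val_inj/g_injective eq].
- by exists q; rewrite // inE /= lt Hq.
- by exists (q.2, q.1); rewrite /= 1?F_sym // inE /= gt H_sym.
- by rewrite eq ltnn in q12.
Qed.

Lemma tdens_as_sum (G : rel 'I_n) :
  tdens F G = / INR (n ^_ k) * \big[Rplus/0]_(g in injs k n) (if g \in inj_hom F G then 1 else 0).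
Proof.
rewrite /tdens /Rdiv Rmult_comm -sum1_card.
rewrite (eq_bigl (fun g => (g \in injs k n) && (g \in inj_hom F G))).
  by rewrite -big_mkcondr INR_sum.
by move=> g /=; apply/idP/andP => [hom|[]//]; split=> //; case/inj_homP: hom.
Qed.

(* The mean density of F in G(x,H,kappa) is within m k(k-1)/(n(n-1)) of
   mu_F(x): the two agree on every injective map that does not hit H. *)
Lemma expect_tdens_near_mu :
  Rabs (expect (nonedges H) edge_prob (fun S => tdens F (Gsample H S)) - mu_F F kappa x)
  <= INR #|edges H| * density_step.
Proof.
have N0 : 0 < INR (n ^_ k) by apply/lt_0_INR/ltP/ffact_pos.
rewrite (expect_ext _ (g2 := fun S => / INR (n ^_ k) *
  \big[Rplus/0]_(g in injs k n) (if g \in inj_hom F (Gsample H S) then 1 else 0)));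
  last by move=> S _; rewrite tdens_as_sum.
rewrite expect_scale expect_sum /mu_F -Rmult_minus_distr_l sum_minus Rabs_mult.
rewrite (Rabs_pos_eq (/ _)); last exact/Rlt_le/Rinv_0_lt_compat.
apply: (Rle_trans _ (/ INR (n ^_ k) * INR #|[set g in injs k n | hits_H g]|)).
  apply/Rmult_le_compat_l; first exact/Rlt_le/Rinv_0_lt_compat.
  rewrite -sum1dep_card INR_sum big_mkcondr; eapply Rle_trans; first exact: Rabs_sum_le.
  by apply: sum_le => g g_inj; exact: prob_inj_hom_T_F.
rewrite Rmult_comm /density_step /Rdiv -Rmult_assoc -mult_INR.
by apply: INR_ratio_le; [exact: ffact_pos | nia | exact: card_hits_H].
Qed.

End GraphSampling.

Lemma far_from_mean (t E mu eps r : R) :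
  Rabs (E - mu) <= r -> eps < Rabs (t - mu) -> eps - r < Rabs (t - E).
Proof. by move=> Emu tmu; split_Rabs; lra. Qed.

Theorem lemma1 (kappa : R -> R -> R) (k n : nat) (F : rel 'I_k) (H : rel 'I_n)
  (x : 'I_n -> R) (eps : R) :
  standard_kernel kappa ->
  simple_graph F -> simple_graph H ->
  (k <= n)%N -> (2 <= n)%N ->
  (forall i, 0 <= x i <= 1) ->
  let m := #|edges H| in
  let c := INR (k * (k - 1))%N / INR (n * (n - 1))%N in
  INR m * c < eps ->
  prob_G kappa x H (fun G => Rltb eps (Rabs (tdens F G - mu_F F kappa x)))
  <= 2 * exp (- (2 * (eps - INR m * c) ^ 2)
                / ((INR 'C(n, 2) - INR m) * c ^ 2)).
Proof.
move=> kappa_std F_simple H_simple k_le_n n_ge2 x01 m c eps_gt.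
have w01 := edge_prob01 kappa_std x01.
have mean_near := expect_tdens_near_mu kappa_std F_simple H_simple x01 n_ge2 k_le_n.
have -> : INR 'C(n, 2) - INR m = INR #|nonedges H|.
  by rewrite -(card_edges_nonedges H) plus_INR /m; ring.
rewrite prob_G_expect.
(* in the degenerate case the bound is 2 exp 0 = 2, exceeding any probability *)
have [D0|D_pos] : INR #|nonedges H| * c ^ 2 = 0 \/ 0 < INR #|nonedges H| * c ^ 2
  by have := pos_INR #|nonedges H|; have := pow2_ge_0 c; nra.
  rewrite D0 /Rdiv Rinv_0 Rmult_0_r exp_0; apply: (Rle_trans _ 1); last lra.
  by apply: expect_indicator_le1 => p _; exact: w01.
have d_pos : 0 < eps - INR m * c by lra.
have bd := tdens_bounded_differences (H := H) F_simple n_ge2 k_le_n.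
apply: (Rle_trans _ _ _ _ (mcdiarmid w01 (density_step_ge0 k n_ge2) bd d_pos D_pos)).
(* pointwise, |t - mu_F| > eps forces |t - E t| > eps - m c *)
apply: expect_le => [p _ | S _] //.
change (INR #|edges H| * density_step k n) with (INR m * c) in mean_near.
rewrite /Rltb; case: Rlt_dec => [far_mu|near_mu]; case: Rlt_dec => [far_mean|near_mean] /=; try lra.
by case: near_mean; exact: far_from_mean mean_near far_mu.
Qed.
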